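(* Let $T\in\mathbb{T}$. Then every alternating path in $T$ has length at most three.
   Context: $\mathbb{T}$ is the class of simple undirected weighted trees $T$ (nonzero real weights on edges) such that (i) $T$ has at least one non-pendant vertex, and (ii) every non-pendant vertex of $T$ is adjacent to at least one pendant vertex (a vertex of degree one). Given a maximum matching $M$ of $T$, a path is alternating with respect to $M$ if its edges are alternately in $M$ and not in $M$, with first and last edges in $M$; an alternating path in $T$ is a path alternating with respect to some maximum matching of $T$. *)

From HB Require Import structures.
From mathcomp Require Import all_boot all_order all_algebra.
From mathcomp Require Import reals.
Set Implicit Arguments. Unset Strict Implicit. Unset Printing Implicit Defensive.
Import Order.TTheory GRing.Theory Num.Theory.

(* A simple undirected graph on a finite vertex type V is a symmetric,
   irreflexive relation e : rel V.  Edges are 2-element vertex sets. *)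

Section Graphs.
Variable V : finType.
Variable e : rel V.

Definition simple_graph : Prop := symmetric e /\ irreflexive e.

Definition is_edge (E : {set V}) : bool :=
  [exists x, exists y, e x y && (E == [set x; y])].

Definition is_cycle (x0 : V) (p : seq V) : bool :=
  [&& uniq (x0 :: p), 2 <= size p, path e x0 p & e (last x0 p) x0].

Definition connected : Prop := forall x y : V, connect e x y.

Definition acyclic : Prop := forall x0 p, ~~ is_cycle x0 p.

Definition is_tree : Prop := simple_graph /\ connected /\ acyclic.

Definition degree (x : V) : nat := #|[set y | e x y]|.

Definition pendant (x : V) : bool := degree x == 1.

Definition matching (M : {set {set V}}) : Prop :=
  (forall E, E \in M -> is_edge E) /\
  (forall E F, E \in M -> F \in M -> E != F -> [disjoint E & F]).

Definition maximum_matching (M : {set {set V}}) : Prop :=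
  matching M /\ (forall M', matching M' -> #|M'| <= #|M|).

(* A (simple) path given by its vertex sequence x0 :: p; its length is size p,
   its i-th edge (i < size p) is {v_i, v_(i+1)}. *)
Definition is_path (x0 : V) (p : seq V) : bool := uniq (x0 :: p) && path e x0 p.

Definition path_edge (x0 : V) (p : seq V) (i : nat) : {set V} :=
  [set nth x0 (x0 :: p) i; nth x0 (x0 :: p) i.+1].

(* alternating w.r.t. M: edges alternately in M and not in M, first and last in M;
   equivalently the i-th edge is in M iff i is even, and the length is odd. *)
Definition alternating_wrt (M : {set {set V}}) (x0 : V) (p : seq V) : Prop :=
  is_path x0 p /\ odd (size p) /\
  (forall i, i < size p -> (path_edge x0 p i \in M) = ~~ odd i).

Definition alternating_path (x0 : V) (p : seq V) : Prop :=
  exists M, maximum_matching M /\ alternating_wrt M x0 p.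

End Graphs.

Definition in_class_T (R : realType) (V : finType) (e : rel V) (w : {set V} -> R) : Prop :=
  is_tree e /\
  (forall E, is_edge e E -> w E != 0%R) /\
  (exists x, ~~ pendant e x) /\
  (forall x, ~~ pendant e x -> exists y, e x y && pendant e y).

From HB Require Import structures.
From mathcomp Require Import all_boot all_order all_algebra.
From mathcomp Require Import reals.
Set Implicit Arguments. Unset Strict Implicit. Unset Printing Implicit Defensive.

(* An alternating path of length at least four has an interior matching edge
   {b, c} whose ends both have degree at least two.  In the class T each of
   them then carries a pendant neighbour, u at b and v at c; these are not
   covered by the matching, so u-b-c-v is an augmenting path and the matching
   was not maximum. *)

Lemma disjoint_set2 (T : finType) (x y : T) (A : {set T}) :
  [disjoint [set x; y] & A] = (x \notin A) && (y \notin A).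
Proof. by rewrite disjoints_subset subUset !sub1set !inE. Qed.

Section Matchings.
Variables (V : finType) (e : rel V).
Hypotheses (sym : symmetric e) (irr : irreflexive e).

Lemma pendant_adj_eq u v y : pendant e u -> e u v -> e u y -> y = v.
Proof.
move=> /cards1P [z Nu] euv euy.
have: v \in [set t | e u t] by rewrite inE.
have: y \in [set t | e u t] by rewrite inE.
by rewrite Nu !inE => /eqP -> /eqP ->.
Qed.

Lemma adj2_not_pendant x y z : e x y -> e x z -> y != z -> ~~ pendant e x.
Proof.
move=> exy exz yz; apply/negP => /cards1P [t Nx].
have: [set y; z] \subset [set t | e x t].
  by apply/subsetP => s; rewrite !inE => /orP [] /eqP ->.
rewrite Nx subUset !sub1set !inE => /andP [/eqP yt /eqP zt].
by rewrite yt zt eqxx in yz.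
Qed.

Lemma is_edge2 x y : e x y -> is_edge e [set x; y].
Proof.
by move=> exy; apply/existsP; exists x; apply/existsP; exists y; rewrite exy eqxx.
Qed.

Lemma edge_neighbor E u :
  is_edge e E -> u \in E -> exists2 v, e u v & E = [set u; v].
Proof.
move=> /existsP [x /existsP [y /andP [exy /eqP ->]]].
by rewrite !inE => /orP [] /eqP ->; [exists y | exists x; rewrite 1?sym 1?setUC].
Qed.

Lemma matching_subset (M M' : {set {set V}}) :
  M' \subset M -> matching e M -> matching e M'.
Proof.
move=> /subsetP sM'M [edgeM disjM].
by split=> [E /sM'M /edgeM | E F /sM'M EM /sM'M FM]; last exact: disjM.
Qed.

Lemma matching_eq_of_mem (M : {set {set V}}) E F x :
  matching e M -> E \in M -> F \in M -> x \in E -> x \in F -> E = F.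
Proof.
move=> [_ disjM] EM FM xE xF; apply/eqP; apply: contraT => EF.
by rewrite (disjointFr (disjM _ _ EM FM EF) xE) in xF.
Qed.

Lemma matchingU1 (M : {set {set V}}) E :
  matching e M -> is_edge e E -> (forall F, F \in M -> [disjoint E & F]) ->
  matching e (E |: M) /\ #|E |: M| = #|M|.+1.
Proof.
move=> [edgeM disjM] edgeE disjE.
have [x xE] : exists x, x \in E.
  move: edgeE => /existsP [x /existsP [y /andP [_ /eqP ->]]].
  by exists x; rewrite !inE eqxx.
have EnM : E \notin M by apply/negP => /disjE/disjointFr/(_ xE); rewrite xE.
split; last by rewrite cardsU1 EnM.
split=> [F | F G]; first by case/setU1P=> [-> | /edgeM].
case/setU1P=> [-> | FM] /setU1P [-> | GM]; rewrite ?eqxx //.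
- by move=> _; apply: disjE.
- by move=> _; rewrite disjoint_sym; apply: disjE.
- exact: disjM.
Qed.

Lemma pendant_uncovered (M : {set {set V}}) E u b :
  matching e M -> pendant e u -> e u b -> E \in M -> b \in E -> u \notin E ->
  u \notin cover M.
Proof.
move=> mM pu eub EM bE uE; apply/bigcupP => [[F FM uF]].
have [v euv defF] := edge_neighbor (mM.1 _ FM) uF.
have bF : b \in F by rewrite defF (pendant_adj_eq pu eub euv) !inE eqxx orbT.
by rewrite (matching_eq_of_mem mM EM FM bE bF) uF in uE.
Qed.

Lemma augment3_not_maximum (M : {set {set V}}) u b c v :
  matching e M -> [set b; c] \in M -> e u b -> e b c -> e c v ->
  u \notin cover M -> v \notin cover M -> u != v -> ~ maximum_matching e M.
Proof.
move=> mM bcM eub ebc ecv uM vM uv [_ maxM].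
have uncov x F : x \notin cover M -> F \in M -> x \notin F.
  by move=> xM FM; apply: contra xM; apply/subsetP/bigcup_sup.
have [uc vb] : u != c /\ v != b.
  move: (uncov u _ uM bcM) (uncov v _ vM bcM).
  by rewrite !inE !negb_or => /andP [_ ->] /andP [->].
have bc : b != c by apply: contraTneq ebc => ->; rewrite irr.
set M0 := M :\ [set b; c].
have M0P F : F \in M0 -> [&& F \in M, b \notin F & c \notin F].
  rewrite !inE => /andP [Fbc FM]; rewrite FM -disjoint_set2.
  by apply: mM.2; rewrite // eq_sym.
have [mM1 cardM1] : matching e ([set c; v] |: M0) /\ #|[set c; v] |: M0| = #|M0|.+1.
  apply: matchingU1; [exact: matching_subset (subsetDl _ _) mM | exact: is_edge2 |].
  move=> F /M0P /and3P [FM _ cF].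
  by rewrite disjoint_set2 cF (uncov v F vM FM).
have disj2 F : F \in [set c; v] |: M0 -> [disjoint [set u; b] & F].
  rewrite disjoint_set2 => /setU1P [-> | /M0P /and3P [FM bF _]].
    by rewrite !inE !negb_or uc uv bc eq_sym vb.
  by rewrite bF (uncov u F uM FM).
have [mM2 cardM2] := matchingU1 mM1 (is_edge2 eub) disj2.
by have := maxM _ mM2; rewrite cardM2 cardM1 (cardsD1 [set b; c] M) bcM add1n ltnn.
Qed.

Lemma maximum_matching_edge_pendant (M : {set {set V}}) b c :
  (forall x, ~~ pendant e x -> exists y, e x y && pendant e y) ->
  maximum_matching e M -> [set b; c] \in M -> e b c -> pendant e b || pendant e c.
Proof.
move=> pendN maxM bcM ebc; apply: contraT; rewrite negb_or => /andP [nb nc].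
have [u /andP [ebu pu]] := pendN b nb.
have [v /andP [ecv pv]] := pendN c nc.
have [eub evc] : e u b /\ e v c by rewrite (sym u) (sym v).
have bc : b != c by apply: contraTneq ebc => ->; rewrite irr.
have ub : u != b by apply: contraTneq ebu => ->; rewrite irr.
have uc : u != c by apply: contraNneq nc => <-.
have vb : v != b by apply: contraNneq nb => <-.
have vc : v != c by apply: contraTneq ecv => ->; rewrite irr.
have uM : u \notin cover M.
  apply: (pendant_uncovered maxM.1 pu eub bcM); first by rewrite !inE eqxx.
  by rewrite !inE negb_or ub uc.
have vM : v \notin cover M.
  apply: (pendant_uncovered maxM.1 pv evc bcM); first by rewrite !inE eqxx orbT.
  by rewrite !inE negb_or vb vc.
have uv : u != v.
  by apply: contraTneq pu => uv_eq; apply: (adj2_not_pendant eub _ bc); rewrite uv_eq.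
by case: (augment3_not_maximum maxM.1 bcM eub ebc ecv uM vM uv).
Qed.

End Matchings.

Theorem corollary3p4 (R : realType) (V : finType) (e : rel V) (w : {set V} -> R) :
  @in_class_T R V e w ->
  forall (x0 : V) (p : seq V), alternating_path e x0 p -> size p <= 3.
Proof.
move=> [[[sym irr] _] [_ [_ pendN]]] x0 p [M [maxM [/andP [up pp] [_ alt]]]].
rewrite leqNgt; apply/negP.
case: p up pp alt => [|a [|b [|c [|d p']]]] // up /and5P [_ eab ebc ecd _] alt _.
have bcM : [set b; c] \in M by have := alt 2 isT; rewrite /path_edge /= => ->.
have [ac bd] : a != c /\ b != d.
  move: up; rewrite /= !inE !negb_or.
  by case/and5P=> [_ /and4P [_ -> _ _] /and3P [_ -> _] _ _].
have nb : ~~ pendant e b by apply: adj2_not_pendant ac; rewrite // sym.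
have nc : ~~ pendant e c by apply: adj2_not_pendant bd; rewrite // sym.
have := maximum_matching_edge_pendant sym irr pendN maxM bcM ebc.
by rewrite (negbTE nb) (negbTE nc).
Qed.
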